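(* Let $G$ be a finite simple graph with vertices $v_1,\dots,v_n$ ($n\ge 1$) in which no vertex is adjacent to all other vertices, let $d\ge 1$ be an integer, let $G'$ be the graph constructed from $(G,d)$ as described in the context, and let $h=n(n+1)+d$. Suppose $S_1,\dots,S_h$ are pairwise disjoint vertex sets of $G'$, each inducing a connected subgraph, such that for all $i\ne j$ some edge of $G'$ joins a vertex of $S_i$ to a vertex of $S_j$. Then each $S_i$ contains exactly one non-middle (i.e. top or bottom) vertex, and each non-middle vertex of $G'$ belongs to exactly one of the sets $S_i$.
   Context: Construction of $G'$ from a graph $G$ with vertices $v_1,\dots,v_n$ and an integer $d$: say $v_i$ dominates $v_j$ if $v_i=v_j$ or $v_iv_j$ is an edge of $G$. The vertex set of $G'$ consists of top vertices $t_1,\dots,t_d$, middle vertices $m_1,\dots,m_n$, and bottom vertices $b_{j,k}$ for $1\le j\le n$, $1\le k\le n+1$. Edges: the top vertices form a clique; the middle vertices form an independent set; the bottom vertices form a clique (of size $n(n+1)$); every top vertex is adjacent to every middle vertex; there are no top–bottom edges; middle vertex $m_i$ is adjacent to bottom vertex $b_{j,k}$ if and only if $v_i$ dominates $v_j$ in $G$. *)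

From mathcomp Require Import all_boot.
Set Implicit Arguments. Unset Strict Implicit. Unset Printing Implicit Defensive.

(* Vertices of G': top t_1..t_d, middle m_1..m_n, bottom b_{j,k} (j<=n, k<=n+1). *)
Definition gvert (n d : nat) : finType := ('I_d + ('I_n + ('I_n * 'I_n.+1)))%type.

Definition dominates (n : nat) (e : rel 'I_n) (i j : 'I_n) : bool := (i == j) || e i j.

Definition gadj (n d : nat) (e : rel 'I_n) (x y : gvert n d) : bool :=
  match x, y with
  | inl a, inl b => a != b
  | inl _, inr (inl _) => true
  | inr (inl _), inl _ => true
  | inl _, inr (inr _) => false
  | inr (inr _), inl _ => false
  | inr (inl _), inr (inl _) => false
  | inr (inr a), inr (inr b) => a != b
  | inr (inl i), inr (inr (j, _)) => dominates e i j
  | inr (inr (j, _)), inr (inl i) => dominates e i j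
  end.

Definition is_middle (n d : nat) (x : gvert n d) : bool :=
  match x with inr (inl _) => true | _ => false end.

Definition simple_graph (n : nat) (e : rel 'I_n) : Prop :=
  (forall i j, e i j = e j i) /\ (forall i, ~~ e i i).

Definition induces_connected (T : finType) (adj : rel T) (S : {set T}) : Prop :=
  S != set0 /\
  forall x y, x \in S -> y \in S ->
    connect (fun u v => [&& u \in S, v \in S & adj u v]) x y.

From mathcomp Require Import all_boot zify.
Set Implicit Arguments. Unset Strict Implicit. Unset Printing Implicit Defensive.

(* A branch set containing only middle vertices is a single [m_a], since the middle
   vertices are independent. Its neighbours are top or bottom vertices, and they miss
   the whole column [b_{c,1..n+1}] of a vertex [v_c] not dominated by [v_a]; so there
   are at most [h - n - 1 < h - 1] of them, too few to touch the other branch sets.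
   Hence each of the [h] branch sets contains one of the [h] non-middle vertices, and
   by pigeonhole exactly one, every non-middle vertex being used. *)

Section DisjointFamily.
Variables (I T : finType) (S : I -> {set T}).
Hypothesis S_disj : forall i j, i != j -> [disjoint S i & S j].

Lemma disjoint_family_eq i j x : x \in S i -> x \in S j -> i = j.
Proof.
move=> xi xj; apply/eqP; apply: contraT => /S_disj /disjointFr /(_ xi).
by rewrite xj.
Qed.

Lemma card_meeting_le (J : {set I}) (P : {set T}) :
  {in J, forall j, S j :&: P != set0} -> #|J| <= #|P|.
Proof.
move=> meetJ; pose g j := [pick x in S j :&: P].
have gP j : j \in J -> exists2 x, g j = Some x & x \in S j :&: P.
  move=> /meetJ /set0Pn [x xSP]; rewrite /g.
  by case: pickP => [y ySP | /(_ x)]; [exists y | rewrite xSP].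
have g_inj : {in J &, injective g}.
  move=> j k /gP [x -> /setIP [xj _]] /gP [y -> /setIP [yk _]] [xy].
  by apply: disjoint_family_eq xj _; rewrite xy.
rewrite -(card_in_imset g_inj) -(card_imset P (@Some_inj _)).
apply/subset_leq_card/subsetP => _ /imsetP [j /gP [x -> /setIP [_ xP]] ->].
exact: imset_f.
Qed.

Section Transversal.
Variable P : {set T}.
Hypotheses (card_P : #|P| <= #|I|) (S_meet : forall i, S i :&: P != set0).

(* Otherwise every [S i] meets [P :\ x], contradicting [card_meeting_le]. *)
Lemma meeting_tight x : x \in P -> exists i, S i :&: P = [set x].
Proof.
move=> xP; have [i Si_x] : exists i, S i :&: (P :\ x) == set0.
  apply/existsP; apply: contraTT card_P => /existsPn noS.
  have := @card_meeting_le setT (P :\ x) (fun i _ => noS i).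
  by rewrite cardsT (cardsD1 x P) xP; lia.
exists i; apply/eqP; rewrite eqEcard cards1 card_gt0 S_meet andbT.
apply/subsetP=> y /setIP [yi yP]; rewrite inE; apply: contraTT Si_x => yx.
by apply/set0Pn; exists y; rewrite !inE yx yi yP.
Qed.

Lemma meeting_card1 i : #|S i :&: P| = 1.
Proof.
have /set0Pn [x /[dup] xSP /setIP [xi xP]] := S_meet i.
have [j Sj_x] := meeting_tight xP.
have xj : x \in S j by have := set11 x; rewrite -Sj_x => /setIP [].
by rewrite (disjoint_family_eq xi xj) Sj_x cards1.
Qed.

Lemma meeting_cover x : x \in P -> exists! i, x \in S i.
Proof.
move=> /meeting_tight [i Si_x].
have xi : x \in S i by have := set11 x; rewrite -Si_x => /setIP [].
by exists i; split=> // j /(disjoint_family_eq xi).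
Qed.

End Transversal.
End DisjointFamily.

Lemma connected_independent_eq (T : finType) (adj : rel T) (S : {set T}) x y :
  induces_connected adj S -> {in S &, forall u v, ~~ adj u v} ->
  x \in S -> y \in S -> x = y.
Proof.
move=> [_ S_conn] S_indep xS yS.
have /connectP [[|z p] /= xp ->] // := S_conn x y xS yS.
by move: xp => /andP [/and3P [_ zS xz] _]; move: (S_indep x z xS zS); rewrite xz.
Qed.

Section Construction.
Variables (n d : nat) (e : rel 'I_n).

Definition nonmiddle : {set gvert n d} := [set x | ~~ is_middle x].

Definition mid (i : 'I_n) : gvert n d := inr (inl i).

Lemma middleP (x : gvert n d) : is_middle x -> exists i, x = mid i.
Proof. by case: x => [//|[i _|//]]; exists i. Qed.

Lemma gadj_middle (x y : gvert n d) : is_middle x -> is_middle y -> gadj e x y = false.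
Proof. by case: x => [|[|]] //; case: y => [|[|]]. Qed.

Lemma card_nonmiddle : #|nonmiddle| = n * n.+1 + d.
Proof.
pose emb (z : 'I_d + ('I_n * 'I_n.+1)) : gvert n d :=
  match z with inl a => inl a | inr p => inr (inr p) end.
have emb_inj : injective emb by case=> [a|p] [b|q] //= [->].
have -> : nonmiddle = emb @: setT.
  apply/setP=> x; rewrite inE; apply/idP/imsetP => [|[z _ ->]]; last by case: z.
  by case: x => [a|[//|p]] _; [exists (inl a) | exists (inr p)].
by rewrite card_imset // cardsT card_sum card_prod !card_ord addnC.
Qed.

Definition nbhd (x : gvert n d) : {set gvert n d} := [set y | gadj e x y].

Lemma card_nbhd_mid a c : ~~ dominates e a c -> #|nbhd (mid a)| + n.+1 <= n * n.+1 + d.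
Proof.
move=> not_dom; pose col : {set gvert n d} := [set inr (inr (c, k)) | k : 'I_n.+1].
have card_col : #|col| = n.+1 by rewrite card_imset ?card_ord // => k l [].
have nbhd_col : nbhd (mid a) :&: col = set0.
  apply/setP=> y; rewrite !inE; apply/negbTE/andP => -[ay /imsetP [k _ yk]].
  by move: ay; rewrite yk /= (negbTE not_dom).
rewrite -card_nonmiddle -card_col -[_ + _]subn0 -(cards0 (gvert n d)) -nbhd_col -cardsU.
apply/subset_leq_card/subsetP => y; rewrite !inE => /orP [|/imsetP [k _ ->] //].
by case: y => [|[|]].
Qed.

End Construction.

Section BranchSets.
Variables (n d : nat) (e : rel 'I_n) (I : finType) (S : I -> {set gvert n d}).
Hypotheses (n_gt0 : 0 < n) (no_dominating : forall a, exists c, ~~ dominates e a c).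
Hypotheses (S_disj : forall i j, i != j -> [disjoint S i & S j])
  (S_conn : forall i, induces_connected (gadj e) (S i))
  (S_adj : forall i j, i != j -> exists x y, [/\ x \in S i, y \in S j & gadj e x y]).

Lemma branch_meets_nonmiddle i : n * n.+1 + d <= #|I| -> S i :&: nonmiddle n d != set0.
Proof.
move=> card_I; apply: contraT; rewrite negbK => /eqP Si0.
have Si_mid x : x \in S i -> is_middle x.
  move=> xi; apply: contraT => xnm; suff : x \in set0 by rewrite inE.
  by rewrite -Si0 !inE xi xnm.
have [x0 x0i] := set0Pn _ (proj1 (S_conn i)).
have [a x0a] := middleP (Si_mid x0 x0i).
have Si_a x : x \in S i -> x = mid d a.
  move=> xi; rewrite -x0a; apply: connected_independent_eq (S_conn i) _ xi x0i.
  by move=> u v ui vi; rewrite gadj_middle ?Si_mid.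
have [c not_dom] := no_dominating a.
have : #|[set~ i]| <= #|nbhd e (mid d a)|.
  apply: (card_meeting_le S_disj) => j; rewrite !inE eq_sym => ij.
  have [x [y [xi yj xy]]] := S_adj ij.
  by apply/set0Pn; exists y; rewrite !inE yj -(Si_a x xi) xy.
have := card_nbhd_mid d not_dom; rewrite cardsC1; lia.
Qed.

End BranchSets.

Theorem lemma3 (n d : nat) (e : rel 'I_n)
  (hn : 1 <= n) (hd : 1 <= d)
  (hG : simple_graph e)
  (hnodom : forall i : 'I_n, exists j : 'I_n, j != i /\ ~~ e i j)
  (S : 'I_(n * n.+1 + d) -> {set gvert n d})
  (hdisj : forall i j, i != j -> [disjoint S i & S j])
  (hconn : forall i, induces_connected (gadj e) (S i))
  (hadj : forall i j, i != j ->
     exists x, exists y, [/\ x \in S i, y \in S j & gadj e x y]) :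
  (forall i, #|[set x in S i | ~~ is_middle x]| = 1) /\
  (forall x : gvert n d, ~~ is_middle x -> exists! i, x \in S i).
Proof.
have no_dominating a : exists c, ~~ dominates e a c.
  by have [c [ca not_ac]] := hnodom a; exists c; rewrite /dominates eq_sym (negbTE ca).
have card_I : #|nonmiddle n d| <= #|'I_(n * n.+1 + d)|.
  by rewrite card_nonmiddle card_ord.
have S_meet i : S i :&: nonmiddle n d != set0.
  by apply: (branch_meets_nonmiddle hn no_dominating hdisj hconn hadj); rewrite card_ord.
split=> [i | x x_nonmid]; first by rewrite setIdE (meeting_card1 hdisj card_I S_meet).
by apply: (meeting_cover hdisj card_I S_meet); rewrite inE.
Qed.
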